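(* Let $A=(a_{i,j})$ be an $n\times n$ matrix with entries in an associative (not necessarily commutative) algebra and fix $1\le j\le n$. If the column determinant of every left $j$-minor of $A$ is zero, then $\mathrm{cdet}A=0$.
   Context: For an $m\times m$ matrix $B=(b_{i,k})$ over an associative algebra, its column determinant is $\mathrm{cdet}B:=\sum_{w\in S_m}\mathrm{sgn}(w)b_{w1,1}b_{w2,2}\cdots b_{wm,m}$. A left $j$-minor of $A$ is a $j\times j$ submatrix $(a_{i_p,q})_{1\le p,q\le j}$ for some $1\le i_1<i_2<\cdots<i_j\le n$ (rows $i_1,\dots,i_j$, columns $1,\dots,j$). *)

From HB Require Import structures.
From mathcomp Require Import all_boot all_order all_algebra all_fingroup.
Set Implicit Arguments. Unset Strict Implicit. Unset Printing Implicit Defensive.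
Import GRing.Theory.
Local Open Scope ring_scope.

Definition cdet (R : pzRingType) (m : nat) (B : 'M[R]_m) : R :=
  \sum_(w : 'S_m) (-1) ^+ w * \prod_(k < m) B (w k) k.

Definition left_minor (R : Type) (n j : nat) (Hj : (j <= n)%N)
    (A : 'M[R]_n) (f : 'I_j -> 'I_n) : 'M[R]_j :=
  \matrix_(p < j, q < j) A (f p) (widen_ord Hj q).

Definition strictly_increasing (n j : nat) (f : 'I_j -> 'I_n) : Prop :=
  forall p q : 'I_j, (p < q)%N -> (f p < f q)%N.

From HB Require Import structures.
From mathcomp Require Import all_boot all_order all_algebra all_fingroup.
Import GRing.Theory.
Local Open Scope ring_scope.

(* Expanding cdet A along its last column writes it as a combination of the
   column determinants of the minors obtained by deleting the last column and
   one row; each such minor has the same left j-minors as A (up to relabelling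
   the rows), so induction on the size of A reduces everything to the case
   j = n, where A is its own left j-minor.  Expanding along the LAST column is
   what keeps the noncommutative products in column order. *)

Lemma lift_perm_bij_on {n} (i0 j0 : 'I_n.+1) :
  {on [pred s : 'S_n.+1 | s i0 == j0], bijective (lift_perm i0 j0)}.
Proof.
pose unlift_perm (s : 'S_n.+1) k := odflt k (unlift (s i0) (s (lift i0 k))).
have unlift_permK (s : 'S_n.+1) (k : 'I_n) :
    lift (s i0) (unlift_perm s k) = s (lift i0 k).
  rewrite /unlift_perm; have:= neq_lift i0 k.
  by rewrite -(can_eq (permK s)) => /unlift_some[] ? ? ->.
have unlift_perm_inj (s : 'S_n.+1) : injective (unlift_perm s).
  apply: can_inj (fun k => odflt k (unlift i0 (s^-1%g (lift (s i0) k)))) _ => k.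
  by rewrite unlift_permK permK liftK.
exists (fun s => perm (unlift_perm_inj s)) => [s _ | s /eqP si0].
  apply/permP => k.
  by rewrite permE /unlift_perm lift_perm_lift lift_perm_id liftK.
apply/permP => k; case: (unliftP i0 k) => [k'|] ->.
  by rewrite lift_perm_lift -si0 permE unlift_permK.
by rewrite lift_perm_id.
Qed.

Lemma cdet_expand_col_max (R : pzRingType) n (A : 'M[R]_n.+1) :
  cdet A = \sum_(i < n.+1)
             (-1) ^+ (i + n) * cdet (row' i (col' ord_max A)) * A i ord_max.
Proof.
rewrite /cdet (partition_big (fun s : 'S_n.+1 => s ord_max) xpredT) //=.
apply: eq_bigr => i _; rewrite (reindex _ (lift_perm_bij_on ord_max i)) /=.
rewrite big_distrr big_distrl /=.
apply: eq_big => [s | s _]; first by rewrite lift_perm_id eqxx.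
have sign_lift :
    (-1) ^+ lift_perm ord_max i s = (-1) ^+ (i + n) * (-1) ^+ s :> R.
  by rewrite odd_lift_perm signr_addb -[in RHS]signr_odd oddD addbC.
rewrite big_ord_recr /= lift_perm_id sign_lift -!mulrA.
congr (_ * (_ * (_ * _))).
apply: eq_bigr => k _; rewrite !mxE.
have -> : widen_ord (leqnSn n) k = lift ord_max k.
  by apply: val_inj; rewrite /= /bump leqNgt ltn_ord.
by rewrite lift_perm_lift.
Qed.

Lemma strictly_increasing_lift n j (i : 'I_n.+1) (f : 'I_j -> 'I_n) :
  strictly_increasing f -> strictly_increasing (lift i \o f).
Proof. by move=> incf p q /incf; rewrite /= !ltnNge leq_bump2. Qed.

Lemma left_minor_row'_col' {R : Type} {n j}
    (Hj : (j <= n)%N) (HjS : (j <= n.+1)%N)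
    (A : 'M[R]_n.+1) i (f : 'I_j -> 'I_n) :
  left_minor Hj (row' i (col' ord_max A)) f = left_minor HjS A (lift i \o f).
Proof.
apply/matrixP => p q; rewrite !mxE; congr (A _ _); apply: val_inj => /=.
by rewrite /bump leqNgt (leq_trans (ltn_ord q) Hj).
Qed.

Lemma left_minor_widen {R : Type} {n} (Hn : (n <= n)%N) (A : 'M[R]_n) :
  left_minor Hn A (widen_ord Hn) = A.
Proof. by apply/matrixP => p q; rewrite mxE; congr (A _ _); apply: val_inj. Qed.

Lemma cdet_eq0_of_full_left_minor (R : pzRingType) n (Hn : (n <= n)%N)
    (A : 'M[R]_n) :
  (forall f, strictly_increasing f -> cdet (left_minor Hn A f) = 0) ->
  cdet A = 0.
Proof. by move=> minors0; rewrite -(left_minor_widen Hn A) minors0. Qed.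

Lemma cdet_eq0_of_left_minors (R : pzRingType) n j (Hj : (j <= n)%N)
    (A : 'M[R]_n) :
  (forall f, strictly_increasing f -> cdet (left_minor Hj A f) = 0) ->
  cdet A = 0.
Proof.
elim: n A Hj => [|n IHn] A Hj minors0.
  have j0 : j = 0%N by apply/eqP; rewrite -leqn0.
  by subst j; apply: cdet_eq0_of_full_left_minor minors0.
have [ltjn | lenj] := ltnP j n.+1; last first.
  have jn : j = n.+1 by apply/eqP; rewrite eqn_leq Hj.
  by subst j; apply: cdet_eq0_of_full_left_minor minors0.
rewrite cdet_expand_col_max big1 // => i _.
rewrite (IHn _ ltjn) ?mulr0 ?mul0r // => f incf.
by rewrite (left_minor_row'_col' _ Hj); apply/minors0/strictly_increasing_lift.
Qed.

Theorem lemma2p1 (K : fieldType) (B : algType K) (n j : nat)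
    (A : 'M[B]_n) (Hj1 : (1 <= j)%N) (Hj : (j <= n)%N) :
  (forall f : 'I_j -> 'I_n, strictly_increasing f ->
     cdet (left_minor Hj A f) = 0) ->
  cdet A = 0.
Proof. exact: cdet_eq0_of_left_minors. Qed.
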